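(* Let $n \ge 2$. For any experiment design $\mathcal{S} = (S_1,\dots,S_T)$ of subsets of $[n]$, whether adaptive or non-adaptive, that enables nest identification for $n$ items under the Nested Logit model with outside option satisfying Assumption 1 (in the sense defined in the context), we have $|\mathcal{S}| = T = \Omega(\log n)$.
   Context: Nested Logit model with outside option on items $[n]=\{1,\dots,n\}$: $\mathcal{N}$ is a partition of $[n]$ into nests, $N(i)$ the nest containing $i$; weights $v_i > 0$; parameters $\lambda_N \in [0,1]$, with an extra weight $v_N>0$ when $\lambda_N=0$. $v_N(S) = (\sum_{i \in N \cap S} v_i)^{\lambda_N}$ if $\lambda_N \in (0,1]$, $v_N(S) = v_N \mathbf{1}(N \cap S \neq \emptyset)$ if $\lambda_N = 0$. For $i \in S$, $\phi(i,S) = \frac{v_{N(i)}(S)}{1 + \sum_{N} v_N(S)} \cdot \frac{v_i}{\sum_{j \in N(i) \cap S} v_j}$, and the outside option has $\phi(0,S) = \frac{1}{1 + \sum_N v_N(S)}$. Assumption 1: $\lambda_N = 1$ iff $|N| = 1$. An experiment design queries assortments $S_1,\dots,S_T \subseteq [n]$ and observes the exact choice probabilities $\phi(\cdot, S_t)$ for each queried assortment; it is non-adaptive if the $S_t$ are fixed in advance and adaptive if each $S_t$ may depend on the probabilities observed for $S_1,\dots,S_{t-1}$. It enables nest identification if, for every Nested Logit model satisfying Assumption 1, the nest partition $\mathcal{N}$ is uniquely determined by the observed choice probabilities, i.e., no two such models with different nest partitions induce identical choice probabilities on all queried assortments. *)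

From HB Require Import structures.
From mathcomp Require Import all_boot all_order all_algebra.
From mathcomp Require Import reals exp.
Set Implicit Arguments. Unset Strict Implicit. Unset Printing Implicit Defensive.
Import Order.TTheory GRing.Theory Num.Theory.
Local Open Scope ring_scope.

Section NestedLogit.
Variables (R : realType) (n : nat).

Record NLmodel := NLModel {
  nests : {set {set 'I_n}};
  wt    : 'I_n -> R;
  lam   : {set 'I_n} -> R;
  wN    : {set 'I_n} -> R        (* extra nest weight v_N (used when lambda_N = 0) *)
}.

Definition valid_NL (M : NLmodel) : Prop :=
  [/\ partition (nests M) [set: 'I_n],
      (forall i, 0 < wt M i),
      (forall N, N \in nests M -> 0 <= lam M N <= 1),
      (forall N, N \in nests M -> lam M N = 0 -> 0 < wN M N)
    & (* Assumption 1 *)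
      (forall N, N \in nests M -> (lam M N = 1 <-> #|N| = 1%N))].

Definition nest_of (M : NLmodel) (i : 'I_n) : {set 'I_n} := pblock (nests M) i.

Definition wsum (M : NLmodel) (A : {set 'I_n}) : R := \sum_(j in A) wt M j.

Definition vnest (M : NLmodel) (N S : {set 'I_n}) : R :=
  if 0 < lam M N then powR (wsum M (N :&: S)) (lam M N)
  else (if N :&: S != set0 then wN M N else 0).

Definition denom (M : NLmodel) (S : {set 'I_n}) : R :=
  1 + \sum_(N in nests M) vnest M N S.

(* choice probabilities phi(., S): None is the outside option 0;
   items not offered in S get probability 0. *)
Definition choice_prob (M : NLmodel) (S : {set 'I_n}) (o : option 'I_n) : R :=
  match o with
  | None => 1 / denom M S
  | Some i =>
      if i \in S then
        vnest M (nest_of M i) S / denom M S * (wt M i / wsum M (nest_of M i :&: S))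
      else 0
  end.

(* An (adaptive) experiment design: the next assortment is a function of the
   observed choice-probability vectors of the previous queries.  Non-adaptive
   designs are those ignoring the history. *)
Definition design := seq (option 'I_n -> R) -> {set 'I_n}.

Fixpoint transcript (d : design) (M : NLmodel) (t : nat) : seq (option 'I_n -> R) :=
  match t with
  | O => [::]
  | t'.+1 => let h := transcript d M t' in rcons h (choice_prob M (d h))
  end.

Definition identifies (d : design) (T : nat) : Prop :=
  forall M1 M2 : NLmodel, valid_NL M1 -> valid_NL M2 ->
    transcript d M1 T = transcript d M2 T -> nests M1 = nests M2.

End NestedLogit.

From HB Require Import structures.
From mathcomp Require Import all_boot all_order all_algebra.
From mathcomp Require Import boolp reals exp.
Set Implicit Arguments. Unset Strict Implicit. Unset Printing Implicit Defensive.
Import Order.TTheory GRing.Theory Num.Theory.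
Local Open Scope ring_scope.

(* Give every item weight 1, every singleton nest lambda = 1, and every larger
   nest N lambda = 0 with nest weight |N|.  If the assortment S is a union of
   nests, each nest contributes |N :&: S| to the denominator, so every offered
   item is chosen with probability 1/(1 + |S|), whatever the partition.  Hence
   if the T queries of a design never separate two items i <> j, the partition
   into singletons and the one merging i and j give identical transcripts.  An
   identifying design must therefore give the n items pairwise distinct
   membership patterns in {0,1}^T, so n <= 2^T and ln n <= T ln 2 <= T. *)

Definition saturated (T : finType) (P : {set {set T}}) (S : {set T}) :=
  {in P, forall N, N :&: S = set0 \/ N \subset S}.

Lemma preim_partition_saturated (T : finType) (K : eqType) (f : T -> K)
    (S : {set T}) :
  (forall x y, f x = f y -> (x \in S) = (y \in S)) ->
  saturated (preim_partition f [set: T]) S.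
Proof.
move=> fS _ /imsetP[x _ ->]; case xS: (x \in S); [right | left].
  by apply/subsetP => y; rewrite !inE => /eqP/fS <-.
by apply/setP => y; rewrite !inE; apply/negbTE/negP => /andP[/andP[_ /eqP/fS]];
  rewrite xS => <-.
Qed.

Lemma preim_partition_fibers (T : finType) (K1 K2 : eqType) (f : T -> K1)
    (g : T -> K2) (D : {set T}) :
  preim_partition f D = preim_partition g D ->
  {in D &, forall x y, (f x == f y) = (g x == g y)}.
Proof.
have eqv (K : eqType) (h : T -> K) :
    {in D & &, equivalence_rel (fun x y => h x == h y)}.
  by move=> x y z _ _ _; split=> // /eqP->.
move=> Efg x y xD yD.
rewrite -(pblock_equivalence_partition (eqv _ f) xD yD).
by rewrite -(pblock_equivalence_partition (eqv _ g) xD yD) [X in pblock X]Efg.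
Qed.

Definition fuse (T : eqType) (i j x : T) : T := if x == j then i else x.

Lemma fuse_eq_mem (T : eqType) (i j x y : T) (S : {pred T}) :
  (i \in S) = (j \in S) -> fuse i j x = fuse i j y -> (x \in S) = (y \in S).
Proof.
by rewrite /fuse => ij; do 2 case: eqP => [->|_]; move=> Exy; subst; rewrite ?ij.
Qed.

Lemma exists_unseparated_pair (T : finType) (m : nat) (Q : 'I_m -> {set T}) :
  (2 ^ m < #|T|)%N -> exists i j, i != j /\ forall t, (i \in Q t) = (j \in Q t).
Proof.
move=> ltT; pose pattern x := [ffun t => x \in Q t].
have /injectivePn[i [j nij Eij]] : ~~ injectiveb pattern.
  apply: contraTN ltT => /injectiveP/leq_card.
  by rewrite card_ffun card_bool card_ord -leqNgt.
exists i, j; split=> // t.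
by have := congr1 (fun p : {ffun 'I_m -> bool} => p t) Eij; rewrite !ffunE.
Qed.

Lemma ln_le_of_le_expn2 (R : realType) (n T : nat) :
  (0 < n)%N -> (n <= 2 ^ T)%N -> ln (n%:R : R) <= T%:R.
Proof.
move=> n_gt0 le_n.
have ln2_le1 : ln (2 : R) <= 1 by apply: (@le_ln1Dx R 1); rewrite gtrN ?ltr01.
apply: (@le_trans _ _ (ln ((2 : R) ^+ T))).
  by rewrite -natrX ler_ln ?posrE ?ltr0n ?expn_gt0 // ler_nat.
by rewrite lnXn // ler_wMn2r.
Qed.

Section UniformNestedLogit.
Variables (R : realType) (n : nat).
Implicit Types (P : {set {set 'I_n}}) (N S : {set 'I_n}).

Definition uniform_nl P : NLmodel R n :=
  NLModel P (fun _ => 1) (fun N => (#|N| == 1%N)%:R) (fun N => #|N|%:R).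

Definition uniform_choice S (o : option 'I_n) : R :=
  (if o is Some x then x \in S else true)%:R / (1 + #|S|%:R).

Lemma uniform_nl_valid P : partition P [set: 'I_n] -> valid_NL (uniform_nl P).
Proof.
move=> partP; have [_ _ P0] := and3P partP; split=> [//|_|N _|N NP _|N _] /=.
- exact: ltr01.
- by case: eqP; rewrite ?lexx ?ler01.
- by rewrite ltr0n card_gt0; apply: contraNneq P0 => <-.
- by case: eqP => //; split=> // /esym/eqP; rewrite oner_eq0.
Qed.

Lemma wsum_uniform_nl P A : wsum (uniform_nl P) A = #|A|%:R.
Proof. exact: sumr_const. Qed.

Lemma vnest_uniform_nl P N S : N :&: S = set0 \/ N \subset S ->
  vnest (uniform_nl P) N S = #|N :&: S|%:R.
Proof.
rewrite /vnest wsum_uniform_nl /=.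
case: eqP => [_|_ NS]; first by rewrite ltr01 powRr1 ?ler0n.
rewrite ltxx; case: NS => [->|/setIidPl ->]; first by rewrite eqxx cards0.
by case: eqP => [->|]; rewrite ?cards0.
Qed.

Lemma denom_uniform_nl P S : partition P [set: 'I_n] -> saturated P S ->
  denom (uniform_nl P) S = 1 + #|S|%:R.
Proof.
move=> /and3P[/eqP coverP trivP _] satS.
rewrite /denom (eq_bigr _ (fun N NP => vnest_uniform_nl P (satS N NP))).
rewrite -natr_sum; congr (1 + _%:R).
have cardI A : #|A :&: S| = (\sum_(x in A | x \in S) 1)%N.
  by rewrite -sum1_card; apply: eq_bigl => x; rewrite inE.
rewrite (eq_bigr _ (fun A _ => cardI A)) -big_trivIset_cond // coverP.
by rewrite -sum1_card; apply: eq_bigl => x; rewrite inE.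
Qed.

Lemma choice_prob_uniform_nl P S : partition P [set: 'I_n] -> saturated P S ->
  choice_prob (uniform_nl P) S = uniform_choice S.
Proof.
move=> partP satS; apply: funext => -[x|]; rewrite /choice_prob /uniform_choice;
  rewrite (denom_uniform_nl partP satS) //.
case: ifP => [xS|]; last by rewrite mul0r.
have xP : x \in cover P by have [/eqP->] := and3P partP; rewrite inE.
rewrite /nest_of /= vnest_uniform_nl ?wsum_uniform_nl; last first.
  by apply: satS; exact: pblock_mem.
have k_gt0 : (0 < #|pblock P x :&: S|)%N.
  by rewrite card_gt0; apply/set0Pn; exists x; rewrite inE mem_pblock xP.
by rewrite mulrAC div1r mulfV // pnatr_eq0 -lt0n.
Qed.

Lemma transcript_eq (d : design R n) (M1 M2 : NLmodel R n) (T : nat) :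
  (forall t, (t < T)%N -> choice_prob M1 (d (transcript d M1 t)) =
                          choice_prob M2 (d (transcript d M1 t))) ->
  transcript d M1 T = transcript d M2 T.
Proof.
elim: T => //= T IH E12.
by rewrite -IH ?E12 // => t /ltnW/E12.
Qed.

Lemma identifies_card_le (d : design R n) (T : nat) :
  identifies d T -> (n <= 2 ^ T)%N.
Proof.
move=> idT; rewrite leqNgt; apply/negP => ltT.
pose M0 := uniform_nl (preim_partition id [set: 'I_n]).
have := @exists_unseparated_pair _ _ (fun t : 'I_T => d (transcript d M0 t)).
rewrite card_ord => /(_ ltT)[i [j [nij sameQ]]].
pose M1 := uniform_nl (preim_partition (fuse i j) [set: 'I_n]).
have obs : transcript d M0 T = transcript d M1 T.
  apply: transcript_eq => t tT.
  rewrite !choice_prob_uniform_nl ?preim_partitionP //;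
    apply: preim_partition_saturated => x y; last by move=> ->.
  exact/fuse_eq_mem/(sameQ (Ordinal tT)).
have := preim_partition_fibers
  (idT _ _ (uniform_nl_valid (preim_partitionP _ _))
           (uniform_nl_valid (preim_partitionP _ _)) obs) (in_setT i) (in_setT j).
by rewrite /fuse eqxx (negbTE nij) eqxx.
Qed.

End UniformNestedLogit.

Theorem theoremB1 (R : realType) :
  exists c : R, 0 < c /\
    forall (n : nat), (2 <= n)%N ->
    forall (T : nat) (d : design R n),
      identifies d T -> c * ln (n%:R : R) <= T%:R.
Proof.
exists 1; split=> [|n n_ge2 T d idT]; first exact: ltr01.
rewrite mul1r; apply: ln_le_of_le_expn2; first exact: ltnW.
exact: identifies_card_le idT.
Qed.
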